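(* Call a real sequence $A$ over $\mathbb{Z}^2$ a counterexample if $|A|=3.99$, every multiplicity is $\le\frac12$, every line in $\mathbb{R}^2$ contains at most $\frac32$ points of $A$, and $\Sigma^1_{\mathbb{R}}(A)$ contains no lattice point of $\mathbb{Z}^2$ in its interior. If a counterexample exists, then there exists a counterexample $A$ with the following property: whenever $v_1,v_2,v_3,v$ are distinct lattice points with $\mu(v_1),\mu(v_2),\mu(v_3)>0$ and $v$ lies in the interior or on the boundary of the triangle with vertices $v_1,v_2,v_3$, then either $\mu(v)=\frac12$, or $v$ lies on a line $\ell$ containing exactly $\frac32$ points of $A$; moreover, if $v$ lies on the boundary of the triangle, such a line $\ell$ is not the line supporting the side of the triangle containing $v$.
   Context: A real sequence $A$ over $\mathbb{Z}^2$ is a family of pairs $(a_i,\mu_i)$ of distinct points $a_i\in\mathbb{Z}^2$ and non-negative reals $\mu_i$ (multiplicities; $\mu(v)$ is the multiplicity of $v$, $0$ if $v$ does not occur); $|A|=\sum_i\mu_i$. A set $X$ contains $\sum_{i:a_i\in X}\mu_i$ points of $A$. $\Sigma^1_{\mathbb{R}}(A)=\{\sum_i t_ia_i : t_i\in[0,\mu_i],\ \sum_i t_i=1\}$. *)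

From HB Require Import structures.
From mathcomp Require Import all_boot all_order all_algebra.
From mathcomp Require Import all_classical all_reals all_analysis.
Set Implicit Arguments. Unset Strict Implicit. Unset Printing Implicit Defensive.
Import Order.TTheory GRing.Theory Num.Theory.
Import numFieldNormedType.Exports.
Local Open Scope ring_scope.
Local Open Scope classical_set_scope.

Definition pt := (int * int)%type.

Section RealSeq.
Variable R : realType.

(* A real sequence over Z^2: a finite family of pairs (a_i, mu_i). *)
Definition rseq := seq (pt * R).

Definition valid_rseq (A : rseq) : Prop :=
  uniq (map fst A) /\ all (fun x => 0 <= x.2) A.

Definition emb (v : pt) : R * R := (v.1%:~R, v.2%:~R).

Definition mult (A : rseq) (v : pt) : R := \sum_(x <- A | x.1 == v) x.2.

Definition total (A : rseq) : R := \sum_(x <- A) x.2.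

Definition count_in (A : rseq) (X : set (R * R)) : R :=
  \sum_(x <- A | `[< X (emb x.1) >]) x.2.

Definition is_line (L : set (R * R)) : Prop :=
  exists a b c : R, (a != 0 \/ b != 0) /\
    L = [set p | a * p.1 + b * p.2 = c].

Definition sigma1 (A : rseq) : set (R * R) :=
  [set p | exists t : 'I_(size A) -> R,
     (forall i : 'I_(size A), 0 <= t i <= (tnth (in_tuple A) i).2) /\
     \sum_(i < size A) t i = 1 /\
     p = (\sum_(i < size A) t i * ((tnth (in_tuple A) i).1.1)%:~R,
          \sum_(i < size A) t i * ((tnth (in_tuple A) i).1.2)%:~R)].

Definition in_triangle (p1 p2 p3 p : R * R) : Prop :=
  exists a b c : R, 0 <= a /\ 0 <= b /\ 0 <= c /\ a + b + c = 1 /\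
    p = (a * p1.1 + b * p2.1 + c * p3.1, a * p1.2 + b * p2.2 + c * p3.2).

Definition on_segment (p1 p2 p : R * R) : Prop :=
  exists a : R, 0 <= a <= 1 /\
    p = ((1 - a) * p1.1 + a * p2.1, (1 - a) * p1.2 + a * p2.2).

Definition line_through (p1 p2 : R * R) : set (R * R) :=
  [set p | exists t : R,
     p = (p1.1 + t * (p2.1 - p1.1), p1.2 + t * (p2.2 - p1.2))].

Definition counterexample (A : rseq) : Prop :=
  [/\ valid_rseq A,
      total A = 399%:R / 100%:R,
      all (fun x => x.2 <= 2^-1) A,
      (forall L, is_line L -> count_in A L <= 3%:R / 2%:R) &
      ~ (exists v : pt, interior (sigma1 A) (emb v))].

Definition triangle_property (A : rseq) : Prop :=
  forall v1 v2 v3 v : pt,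
    uniq [:: v1; v2; v3; v] ->
    0 < mult A v1 -> 0 < mult A v2 -> 0 < mult A v3 ->
    in_triangle (emb v1) (emb v2) (emb v3) (emb v) ->
    mult A v = 2^-1 \/
    exists L : set (R * R),
      [/\ is_line L, L (emb v), count_in A L = 3%:R / 2%:R &
          forall p q : pt, (p, q) \in [:: (v1, v2); (v2, v3); (v1, v3)] ->
            on_segment (emb p) (emb q) (emb v) ->
            L <> line_through (emb p) (emb q)].

End RealSeq.

(* Fix a counterexample A and spread its mass over the lattice points of a box around it
   by a transport plan in which every lattice point receives mass whose barycentre is that
   point. Then Sigma^1 of the new sequence lies in Sigma^1(A), so it is again a
   counterexample as soon as it obeys the (closed) bounds on multiplicities and lines.
   These plans form a compact set containing the identity plan, so some plan minimises the
   moment of inertia sum_v mu(v) |v|^2. If the triangle property failed at v, moving a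
   small mass from the vertices to v in proportion to the barycentric coordinates of v
   would keep every bound, because no line through v carrying exactly 3/2 points
   separates the vertices used, and would strictly lower the inertia, since |.|^2 is
   strictly convex. *)

From Pilot Require Import Defs.
From mathcomp Require Import all_boot all_order all_algebra.
From mathcomp Require Import all_classical all_reals all_analysis.
From mathcomp Require Import ring zify.
Set Implicit Arguments. Unset Strict Implicit. Unset Printing Implicit Defensive.
Import Order.TTheory GRing.Theory Num.Theory.
Import numFieldNormedType.Exports.
Local Open Scope ring_scope.
Local Open Scope classical_set_scope.

Section ClosedConstraints.
Variables (R : realType) (T : topologicalType).
Implicit Types f g : T -> R.

Lemma continuous_sum (I : Type) (r : seq I) (P : pred I) (F : I -> T -> R) :
  (forall i, continuous (F i)) -> continuous (fun x => \sum_(i <- r | P i) F i x).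
Proof.
move=> cF; elim: r => [|i r IHr].
  by under eq_fun do rewrite big_nil; exact: cst_continuous.
under eq_fun do rewrite big_cons.
by case: (P i) => // x; apply: continuousD; [exact: cF | exact: IHr].
Qed.

Lemma closed_le_fun f g : continuous f -> continuous g -> closed [set x | f x <= g x].
Proof.
move=> cf cg; have cfg : continuous (f - g).
  by move=> x; apply: (@continuousB _ R^o _ f g); [exact: cf | exact: cg].
have := (continuous_closedP _).1 cfg _ (@closed_le R 0).
by congr closed; apply/seteqP; split => x /=; rewrite subr_le0.
Qed.

Lemma closed_eq_fun f g : continuous f -> continuous g -> closed [set x | f x = g x].
Proof.
move=> cf cg; have := closedI (closed_le_fun cf cg) (closed_le_fun cg cf).
congr closed; apply/seteqP; split => x /=; last by move=> ->.
by case=> le_fg le_gf; apply/eqP; rewrite eq_le le_fg le_gf.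
Qed.

Lemma closure_sub_closed (A C : set T) : closed C -> A `<=` C -> closure A `<=` C.
Proof. by move=> cC AC x; rewrite closureE => /(_ C); apply. Qed.

Lemma continuous_mulr_cst f (a : R) : continuous f -> continuous (fun x => f x * a).
Proof.
by move=> cf x; apply: (@continuousM _ _ f (cst a)); [exact: cf | exact: cst_continuous].
Qed.

End ClosedConstraints.

Lemma exists_pos_lower_bound (R : realDomainType) (s : seq R) :
  exists2 e : R, 0 < e & forall y, y \in s -> 0 < y -> e <= y.
Proof.
elim: s => [|a s [e e_gt0 e_le]]; first by exists 1.
have [a_gt0|a_le0] := ltP 0 a.
  exists (Order.min e a); first by rewrite lt_min e_gt0 a_gt0.
  move=> y; rewrite inE => /predU1P[->|/e_le le_ey /le_ey]; rewrite ge_min ?lexx ?orbT //.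
  by move=> ->.
exists e => // y; rewrite inE => /predU1P[->|/e_le //].
by rewrite ltNge a_le0.
Qed.

Lemma sum_if_eq (R : nmodType) (I : finType) (P : pred I) (a : I) (F : I -> R) :
  \sum_(i | P i) (if i == a then F i else 0) = if P a then F a else 0.
Proof.
rewrite -big_mkcondr; have [Pa|nPa] := boolP (P a).
  by rewrite (big_pred1 a) // => i /=; case: eqP => [->|]; rewrite ?Pa ?andbF.
by rewrite big_pred0 // => i; case: eqP => [->|]; rewrite ?(negbTE nPa) ?andbF.
Qed.

Section ConvexCombination.
Variables (R : realFieldType) (I : finType) (c : I -> R).
Hypotheses (c_ge0 : forall l, 0 <= c l) (c_sum1 : \sum_l c l = 1).

Lemma convex_comb_subr (x : I -> R) a :
  \sum_l c l * x l - a = \sum_l c l * (x l - a).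
Proof.
by under [RHS]eq_bigr do rewrite mulrBr; rewrite sumrB -mulr_suml c_sum1 mul1r.
Qed.

Lemma convex_comb_in_itv (x : I -> R) lo hi :
  (forall l, lo <= x l <= hi) -> lo <= \sum_l c l * x l <= hi.
Proof.
move=> x_in; apply/andP; split.
  rewrite -subr_ge0 convex_comb_subr; apply: sumr_ge0 => l _.
  by rewrite mulr_ge0 // subr_ge0; case/andP: (x_in l).
rewrite -subr_ge0 -opprB convex_comb_subr -sumrN; apply: sumr_ge0 => l _.
by rewrite -mulrN opprB mulr_ge0 // subr_ge0; case/andP: (x_in l).
Qed.

Lemma convex_comb_variance (x : I -> R) :
  \sum_l c l * (x l - \sum_m c m * x m) ^+ 2
    = \sum_l c l * x l ^+ 2 - (\sum_l c l * x l) ^+ 2.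
Proof.
set X := \sum_m c m * x m.
rewrite (eq_bigr (fun l => c l * x l ^+ 2 - X *+ 2 * (c l * x l) + X ^+ 2 * c l));
  last by move=> l _; ring.
by rewrite !big_split /= sumrN -!mulr_sumr c_sum1 -/X; ring.
Qed.

Lemma convex_comb_sqnorm_lt (x y : I -> R) :
  (forall l, (x l, y l) != (\sum_m c m * x m, \sum_m c m * y m)) ->
  (\sum_l c l * x l) ^+ 2 + (\sum_l c l * y l) ^+ 2
    < \sum_l c l * (x l ^+ 2 + y l ^+ 2).
Proof.
move=> off_mean; set X := \sum_m c m * x m; set Y := \sum_m c m * y m.
have spread : \sum_l c l * (x l ^+ 2 + y l ^+ 2) - (X ^+ 2 + Y ^+ 2)
    = \sum_l c l * ((x l - X) ^+ 2 + (y l - Y) ^+ 2).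
  under [RHS]eq_bigr do rewrite mulrDr.
  rewrite big_split /= !convex_comb_variance -/X -/Y.
  by under eq_bigr do rewrite mulrDr; rewrite big_split /=; ring.
have [l0 /andP[_ c_l0]] : exists l, true && (0 < c l).
  by apply: psumr_neq0P => //; rewrite c_sum1; apply/eqP; exact: oner_neq0.
have dist_l0 : 0 < (x l0 - X) ^+ 2 + (y l0 - Y) ^+ 2.
  rewrite lt_def paddr_eq0 ?sqr_ge0 // !sqrf_eq0 !subr_eq0 addr_ge0 ?sqr_ge0 //.
  by rewrite andbT -xpair_eqE off_mean.
rewrite -subr_gt0 spread (bigD1 l0) //= ltr_pwDl ?mulr_gt0 //.
by apply: sumr_ge0 => l _; rewrite mulr_ge0 // addr_ge0 ?sqr_ge0.
Qed.

End ConvexCombination.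

Section Plane.
Variable R : realType.

Definition barycenter (I : finType) (c : I -> R) (p : I -> R * R) : R * R :=
  (\sum_l c l * (p l).1, \sum_l c l * (p l).2).

Lemma emb_inj : injective (emb R).
Proof. by case=> [a b] [c d] [/intr_inj -> /intr_inj ->]. Qed.

Lemma line_segment_endpoints (L : set (R * R)) (p q v : R * R) a :
  is_line L -> L v -> v = ((1 - a) * p.1 + a * q.1, (1 - a) * p.2 + a * q.2) ->
  v != p -> v != q -> L p \/ L q -> L p /\ L q.
Proof.
case=> [A [B [C [_ ->]]]] /= Lv v_def v_neq_p v_neq_q.
have a_neq0 : a != 0.
  apply: contraNneq v_neq_p => a0.
  by rewrite v_def a0 subr0 !mul1r !mul0r !addr0 -surjective_pairing.
have a_neq1 : 1 - a != 0.
  apply: contraNneq v_neq_q => /eqP; rewrite subr_eq0 v_def => /eqP <-.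
  by rewrite subrr !mul0r !mul1r !add0r -surjective_pairing.
have split_v : (1 - a) * (A * p.1 + B * p.2 - C) + a * (A * q.1 + B * q.2 - C)
    = A * v.1 + B * v.2 - C by rewrite v_def /=; ring.
rewrite Lv subrr in split_v.
by case=> L_end; move: split_v; rewrite L_end subrr ?mulr0 ?add0r ?addr0 => /eqP;
  rewrite mulf_eq0 ?(negbTE a_neq0) ?(negbTE a_neq1) /= subr_eq0 => /eqP.
Qed.

Lemma line_through_endpoints (p q : R * R) : line_through p q p /\ line_through p q q.
Proof.
split; [exists 0 | exists 1].
  by rewrite !mul0r !addr0 -surjective_pairing.
by rewrite !mul1r !subrKC -surjective_pairing.
Qed.

Lemma mult_le (A : rseq R) v b :
  uniq (map fst A) -> all (fun x => x.2 <= b) A -> 0 <= b -> mult A v <= b.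
Proof.
rewrite /mult; elim: A => [|x A IHA] /=; first by rewrite big_nil.
case/andP => x_new A_uniq /andP[x_le A_le] b_ge0; rewrite big_cons.
case: eqP => [x_v|_]; last exact: IHA.
rewrite big_seq_cond big1 ?addr0 // => y /andP[yA /eqP y_v].
by move: x_new; rewrite x_v -y_v map_f.
Qed.

Lemma sigma1_mapP (k : nat) (g : 'I_k -> pt * R) p :
  sigma1 [seq g i | i <- enum 'I_k] p ->
  exists t : 'I_k -> R, [/\ forall i, 0 <= t i <= (g i).2, \sum_i t i = 1 &
    p = barycenter t (fun i => emb R (g i).1)].
Proof.
set B := [seq g i | i <- enum 'I_k].
pose x0 : pt * R := ((0, 0), 0).
have nthB (i : 'I_k) : nth x0 B i = g i.
  by rewrite /B (nth_map i) ?size_enum_ord // nth_ord_enum.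
have reindex n (e : n = k) (t : 'I_n -> R) :
    (forall i, 0 <= t i <= (nth x0 B i).2) -> \sum_i t i = 1 ->
    p = barycenter t (fun i => emb R (nth x0 B i).1) ->
    exists t : 'I_k -> R, [/\ forall i, 0 <= t i <= (g i).2, \sum_i t i = 1 &
      p = barycenter t (fun i => emb R (g i).1)].
  subst n => t_in t_sum1 p_def; exists t; split => // [i|]; first by rewrite -nthB.
  by rewrite p_def /barycenter; congr pair; apply: eq_bigr => i _; rewrite nthB.
have sizeB : size B = k by rewrite size_map size_enum_ord.
case=> t [t_in [t_sum1 p_def]]; apply: (reindex _ sizeB t) => [i||].
- by have := t_in i; rewrite (tnth_nth x0).
- exact: t_sum1.
- by rewrite p_def /barycenter; congr pair; apply: eq_bigr => i _; rewrite (tnth_nth x0).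
Qed.
End Plane.

Section TransportPlans.
Variables (R : realType) (A : rseq R).
Local Notation n := (size A).

Definition site (j : 'I_n) : pt := (tnth (in_tuple A) j).1.
Definition mass (j : 'I_n) : R := (tnth (in_tuple A) j).2.

(* The box contains every lattice point of the convex hull of A. *)
Definition radius : nat := \max_(x <- A) (absz x.1.1 + absz x.1.2)%N.
Definition box_coords : seq int := [seq k%:Z - radius%:Z | k <- iota 0 radius.*2.+1].
Definition grid : seq pt := [seq (a, b) | a <- box_coords, b <- box_coords].
Local Notation m := (size grid).
Definition gpt (i : 'I_m) : pt := nth (0, 0) grid i.

Definition coord (b : bool) (p : pt) : int := if b then p.1 else p.2.

Lemma mem_box_coords z : (z \in box_coords) = (- radius%:Z <= z <= radius%:Z).
Proof.
apply/mapP/idP => [[k] | z_in]; first by rewrite mem_iota add0n => k_lt ->; lia.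
by exists (absz (z + radius%:Z)); [rewrite mem_iota add0n /=|]; lia.
Qed.

Lemma mem_grid p : (p \in grid) = (p.1 \in box_coords) && (p.2 \in box_coords).
Proof.
apply/allpairsP/andP => [[[a b] [/= a_in b_in ->]] //|[p1 p2]].
by exists p; split => //; case: p {p1 p2}.
Qed.

Lemma gpt_inj : injective gpt.
Proof.
have uniq_grid : uniq grid.
  have uniq_coords : uniq box_coords.
    by rewrite map_inj_uniq ?iota_uniq // => a b /addIr [].
  by rewrite allpairs_uniq // => -[? ?] [? ?].
by move=> i i'; rewrite /gpt => /eqP; rewrite nth_uniq // => /eqP /val_inj.
Qed.

Lemma gpt_in_grid i : gpt i \in grid.
Proof. exact: mem_nth. Qed.

Lemma grid_gpt p : p \in grid -> exists i, gpt i = p.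
Proof.
rewrite -index_mem => idx_lt.
by exists (Ordinal idx_lt); rewrite /gpt nth_index // -index_mem.
Qed.

Lemma site_in_grid j : site j \in grid.
Proof.
have site_le : (absz (site j).1 + absz (site j).2 <= radius)%N.
  exact: (@leq_bigmax_seq _ A xpredT (fun x => absz x.1.1 + absz x.1.2)%N _
    (mem_tnth j (in_tuple A))).
have absz_in z : (absz z <= radius)%N -> z \in box_coords.
  by rewrite mem_box_coords; lia.
by rewrite mem_grid !absz_in // (leq_trans _ site_le) ?leq_addl ?leq_addr.
Qed.

Lemma site_index_lt j : (index (site j) grid < m)%N.
Proof. by rewrite index_mem site_in_grid. Qed.

Definition site_index j : 'I_m := Ordinal (site_index_lt j).

Lemma gpt_site_index j : gpt (site_index j) = site j.
Proof. by rewrite /gpt nth_index ?site_in_grid. Qed.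

Local Notation plan := 'rV[R]_(m * n).
Definition flow (x : plan) i j : R := x ord0 (mxvec_index i j).
Definition load (x : plan) i : R := \sum_j flow x i j.
Local Notation on_line L i := `[< L (emb R (gpt i)) >].
Definition line_load (x : plan) (L : set (R * R)) : R := \sum_(i | on_line L i) load x i.
Definition sqnorm (p : pt) : R := p.1%:~R ^+ 2 + p.2%:~R ^+ 2.
Definition inertia (x : plan) : R := \sum_i load x i * sqnorm (gpt i).
Definition plan_of (f : 'I_m -> 'I_n -> R) : plan := mxvec (\matrix_(i, j) f i j).

(* [flow x i j] is the part of the mass of the j-th point of A sent to [gpt i]; every grid
   point is the barycentre of the mass it receives, whence [sigma1_plan_seq]. *)
Record feasible (x : plan) : Prop := Feasible {
  flow_ge0 : forall i j, 0 <= flow x i j;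
  flow_mass : forall j, \sum_i flow x i j = mass j;
  flow_bary : forall b i,
    \sum_j flow x i j * (coord b (site j))%:~R = load x i * (coord b (gpt i))%:~R;
  load_le_half : forall i, load x i <= 2^-1;
  line_load_le : forall L, is_line L -> line_load x L <= 3%:R / 2%:R }.

Definition optimal (x : plan) : Prop :=
  feasible x /\ forall y, feasible y -> inertia x <= inertia y.

Definition plan_seq (x : plan) : rseq R := [seq (gpt i, load x i) | i <- enum 'I_m].

Lemma flow_plan_of f : flow (plan_of f) = f.
Proof. by apply/funext => i; apply/funext => j; rewrite /flow mxvecE mxE. Qed.

Lemma flow_shift x e f i j : flow (x + e *: plan_of f) i j = flow x i j + e * f i j.
Proof. by rewrite /flow !mxE mxvecE mxE. Qed.

Lemma continuous_flow i j : continuous (fun x => flow x i j).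
Proof. exact: coord_continuous. Qed.

Lemma continuous_load i : continuous (load^~ i).
Proof. by apply: continuous_sum => j; exact: continuous_flow. Qed.

Lemma continuous_inertia : continuous inertia.
Proof. by apply: continuous_sum => i; apply: continuous_mulr_cst; exact: continuous_load. Qed.

Lemma closed_feasible : closed [set x | feasible x].
Proof.
apply/closure_id/seteqP; split => [|x x_cl]; first exact: subset_closure.
have sub C : closed C -> (forall y, feasible y -> C y) -> C x.
  by move=> C_closed feasible_C; exact: closure_sub_closed C_closed feasible_C x x_cl.
have ccst (a : R) : continuous (fun _ : plan => a) := @cst_continuous _ _ a.
split.
- move=> i j; apply: (sub [set y | 0 <= flow y i j]).
    exact: closed_le_fun (ccst 0) (@continuous_flow i j).
  by move=> y /flow_ge0; apply.
- move=> j; apply: (sub [set y | \sum_i flow y i j = mass j]).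
    apply: closed_eq_fun (ccst _).
    by apply: continuous_sum => i; exact: continuous_flow.
  by move=> y /flow_mass; apply.
- move=> b i; apply: (sub [set y | \sum_j flow y i j * (coord b (site j))%:~R
                                    = load y i * (coord b (gpt i))%:~R]).
    apply: closed_eq_fun; last exact/continuous_mulr_cst/continuous_load.
    by apply: continuous_sum => j; exact/continuous_mulr_cst/continuous_flow.
  by move=> y /flow_bary; apply.
- move=> i; apply: (sub [set y | load y i <= 2^-1]).
    exact: closed_le_fun (@continuous_load i) (ccst _).
  by move=> y /load_le_half; apply.
- move=> L L_line; apply: (sub [set y | line_load y L <= 3%:R / 2%:R]).
    apply: closed_le_fun (ccst _).
    by apply: continuous_sum => i; exact: continuous_load.
  by move=> y /line_load_le; apply.
Qed.

Lemma feasible_coord_bound x : feasible x -> forall k, 0 <= x ord0 k <= Defs.total A.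
Proof.
move=> x_feas k; case/mxvec_indexP: k => i j.
have flow_le_mass i' j' : flow x i' j' <= mass j'.
  by rewrite -(flow_mass x_feas) (bigD1 i') //= lerDl sumr_ge0 // => *; exact: flow_ge0.
rewrite -/(flow x i j) flow_ge0 //= (le_trans (flow_le_mass i j)) //.
rewrite /Defs.total big_tnth (bigD1 j) //= lerDl sumr_ge0 // => j' _.
exact: le_trans (flow_ge0 x_feas i j') (flow_le_mass i j').
Qed.

Lemma compact_feasible : compact [set x | feasible x].
Proof.
apply: (subclosed_compact closed_feasible
  (rV_compact (fun=> @segment_compact R 0 (Defs.total A)))).
by move=> x /feasible_coord_bound x_in k /=; rewrite in_itv /=.
Qed.

Lemma load_ge0 x : feasible x -> forall i, 0 <= load x i.
Proof. by move=> x_feas i; apply: sumr_ge0 => j _; exact: flow_ge0. Qed.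

Lemma sum_load x : feasible x -> \sum_i load x i = Defs.total A.
Proof.
move=> x_feas; rewrite /load exchange_big /Defs.total [RHS]big_tnth.
by apply: eq_bigr => j _; exact: flow_mass.
Qed.

Lemma line_load_exchange x L :
  line_load x L = \sum_j \sum_(i | on_line L i) flow x i j.
Proof. exact: exchange_big. Qed.

Section IdentityPlan.
Hypothesis A_counter : counterexample A.

Definition identity_plan : plan :=
  plan_of (fun i j => if i == site_index j then mass j else 0).

Lemma load_identity_plan i : load identity_plan i = mult A (gpt i).
Proof.
rewrite /load flow_plan_of /mult [RHS]big_tnth [RHS]big_mkcond /=.
apply: eq_bigr => j _.
by rewrite -/(site j) -gpt_site_index (inj_eq gpt_inj) eq_sym.
Qed.

Lemma line_load_identity_plan L : line_load identity_plan L = count_in A L.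
Proof.
rewrite line_load_exchange flow_plan_of /count_in [RHS]big_tnth [RHS]big_mkcond /=.
by apply: eq_bigr => j _; rewrite sum_if_eq gpt_site_index.
Qed.

Lemma feasible_identity_plan : feasible identity_plan.
Proof.
case: A_counter => -[A_uniq A_ge0] _ A_le_half A_lines _.
have mass_ge0 j : 0 <= mass j by exact: (allP A_ge0 _ (mem_tnth j (in_tuple A))).
split.
- by move=> i j; rewrite flow_plan_of; case: ifP.
- by move=> j; rewrite flow_plan_of (sum_if_eq predT).
- move=> b i; rewrite /load flow_plan_of mulr_suml; apply: eq_bigr => j _.
  by case: eqP => [->|_]; rewrite ?gpt_site_index ?mul0r.
- by move=> i; rewrite load_identity_plan mult_le // invr_ge0 ler0n.
- by move=> L L_line; rewrite line_load_identity_plan A_lines.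
Qed.

End IdentityPlan.

Lemma exists_optimal : counterexample A -> exists x, optimal x.
Proof.
move=> A_counter.
have [|x x_feas x_min] := @compact_EVT_min _ _ inertia _ _ compact_feasible
  (continuous_subspaceT continuous_inertia).
  by exists identity_plan; exact: feasible_identity_plan.
exists x; split => [|y y_feas]; first by move: x_feas; rewrite inE.
by apply: x_min; rewrite inE.
Qed.

Lemma mult_plan_seq x v : mult (plan_seq x) v = \sum_(i | gpt i == v) load x i.
Proof. by rewrite /mult big_map big_enum_cond. Qed.

Lemma mult_plan_seq_gpt x i : mult (plan_seq x) (gpt i) = load x i.
Proof. by rewrite mult_plan_seq (big_pred1 i) // => i'; rewrite /= (inj_eq gpt_inj). Qed.

Lemma plan_seq_support x v : 0 < mult (plan_seq x) v -> exists i, gpt i = v.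
Proof.
rewrite mult_plan_seq => load_gt0; apply: contrapT => no_i; move: load_gt0.
by rewrite big_pred0 ?ltxx // => i; apply/negbTE/eqP => gpt_i; apply: no_i; exists i.
Qed.

Lemma count_in_plan_seq x L : count_in (plan_seq x) L = line_load x L.
Proof. by rewrite /count_in big_map big_enum_cond. Qed.

Lemma sigma1_plan_seq x : feasible x -> sigma1 (plan_seq x) `<=` sigma1 A.
Proof.
move=> x_feas p; rewrite /plan_seq => /sigma1_mapP[t [t_in t_sum1 ->]].
pose r i := t i / load x i.
have r_ge0 i : 0 <= r i by rewrite divr_ge0 ?load_ge0 //; case/andP: (t_in i).
have r_load i : r i * load x i = t i.
  have [load0|load_neq0] := eqVneq (load x i) 0; last by rewrite divfK.
  by move: (t_in i); rewrite load0 mulr0 -eq_le => /eqP.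
have r_le1 i : r i <= 1.
  have [load0|load_neq0] := eqVneq (load x i) 0; first by rewrite /r load0 invr0 mulr0.
  have load_gt0 : 0 < load x i by rewrite lt_def load_neq0 load_ge0.
  by rewrite ler_pdivrMr // mul1r; case/andP: (t_in i).
pose s j := \sum_i r i * flow x i j.
have s_moment b : \sum_j s j * (coord b (site j))%:~R = \sum_i t i * (coord b (gpt i))%:~R.
  under eq_bigr do rewrite mulr_suml.
  rewrite exchange_big; apply: eq_bigr => i _.
  rewrite -(r_load i) -mulrA -(flow_bary x_feas) mulr_sumr.
  by apply: eq_bigr => j _; rewrite mulrA.
exists s; split; [move=> j; apply/andP; split | split].
- by apply: sumr_ge0 => i _; rewrite mulr_ge0 ?flow_ge0.
- rewrite -/(mass j) -(flow_mass x_feas); apply: ler_sum => i _.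
  by rewrite ler_piMl ?flow_ge0.
- rewrite -t_sum1 exchange_big; apply: eq_bigr => i _.
  by rewrite -mulr_sumr r_load.
- by congr pair; symmetry; [exact: (s_moment true) | exact: (s_moment false)].
Qed.

Lemma uniq_plan_seq x : uniq (map fst (plan_seq x)).
Proof. by rewrite -map_comp map_inj_uniq ?enum_uniq //; exact: gpt_inj. Qed.

Lemma mult_plan_seq_le_half x v : feasible x -> mult (plan_seq x) v <= 2^-1.
Proof.
move=> x_feas; rewrite mult_le ?uniq_plan_seq ?invr_ge0 ?ler0n //.
by rewrite all_map; apply/allP => i _; exact: load_le_half.
Qed.

Lemma plan_seq_counterexample x :
  counterexample A -> feasible x -> counterexample (plan_seq x).
Proof.
case=> _ A_total _ _ A_no_interior x_feas; split.
- split; first exact: uniq_plan_seq.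
  by rewrite all_map; apply/allP => i _; exact: load_ge0.
- by rewrite /Defs.total big_map big_enum sum_load.
- by rewrite all_map; apply/allP => i _; exact: load_le_half.
- by move=> L L_line; rewrite count_in_plan_seq; exact: line_load_le.
- case=> v v_int; apply: A_no_interior; exists v.
  exact: interiorS (sigma1_plan_seq x_feas) _ v_int.
Qed.

Section Move.
Variables (x : plan) (k : 'I_m) (I : finType) (kk : I -> 'I_m) (c : I -> R).
Hypotheses (x_feas : feasible x) (kk_neq_k : forall l, kk l != k).
Hypotheses (c_ge0 : forall l, 0 <= c l) (c_sum1 : \sum_l c l = 1).
Hypothesis k_bary : emb R (gpt k) = barycenter c (fun l => emb R (gpt (kk l))).
Hypothesis kk_load_gt0 : forall l, 0 < load x (kk l).
Hypothesis full_lines : forall L, is_line L -> L (emb R (gpt k)) ->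
  line_load x L = 3%:R / 2%:R -> forall l, 0 < c l -> L (emb R (gpt (kk l))).

(* [move_dir] carries mass [c l] from [gpt (kk l)] to [gpt k], drawn from the sources of
   [gpt (kk l)] in proportion to their flows, so that barycentres are preserved. *)
Definition share l j := c l * flow x (kk l) j / load x (kk l).
Definition outflow i := \sum_l (if i == kk l then c l else 0).
Definition move_dir i j :=
  (if i == k then \sum_l share l j else 0) - \sum_l (if i == kk l then share l j else 0).

Lemma shareE l j : share l j = c l / load x (kk l) * flow x (kk l) j.
Proof. exact: mulrAC. Qed.

Lemma share_ge0 l j : 0 <= share l j.
Proof. by rewrite shareE mulr_ge0 ?divr_ge0 ?c_ge0 ?(flow_ge0 x_feas) ?ltW. Qed.

Lemma sum_share l : \sum_j share l j = c l.
Proof.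
under eq_bigr do rewrite shareE.
by rewrite -mulr_sumr divfK // lt0r_neq0.
Qed.

Lemma coord_bary b : (coord b (gpt k))%:~R = \sum_l c l * (coord b (gpt (kk l)))%:~R :> R.
Proof. by case: b; move: k_bary => [? ?]. Qed.

Lemma share_moment b l :
  \sum_j share l j * (coord b (site j))%:~R = c l * (coord b (gpt (kk l)))%:~R.
Proof.
under eq_bigr do rewrite shareE -mulrA.
by rewrite -mulr_sumr (flow_bary x_feas) mulrA divfK // lt0r_neq0.
Qed.

Lemma outflow_k : outflow k = 0.
Proof. by apply: big1 => l _; rewrite eq_sym (negbTE (kk_neq_k l)). Qed.

Lemma outflow_ge0 i : 0 <= outflow i.
Proof. by apply: sumr_ge0 => l _; case: eqP. Qed.

Lemma outflow_le1 i : outflow i <= 1.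
Proof. by rewrite -c_sum1; apply: ler_sum => l _; case: eqP. Qed.

Lemma outflow_support i : outflow i != 0 -> exists l, i = kk l.
Proof.
move=> /eqP out_neq0; apply: contrapT => no_l; apply: out_neq0; apply: big1 => l _.
by case: eqP => // i_kk; case: no_l; exists l.
Qed.

Lemma outflow_share i j :
  \sum_l (if i == kk l then share l j else 0) = outflow i / load x i * flow x i j.
Proof.
rewrite /outflow !mulr_suml; apply: eq_bigr => l _.
by case: eqP => [->|_]; rewrite ?shareE ?mul0r.
Qed.

Lemma sum_outflow (P : pred 'I_m) (F : 'I_m -> R) :
  \sum_(i | P i) outflow i * F i = \sum_l (if P (kk l) then c l * F (kk l) else 0).
Proof.
under eq_bigr do rewrite /outflow mulr_suml.
rewrite exchange_big; apply: eq_bigr => l _.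
rewrite -(sum_if_eq P (kk l) (fun i => c l * F i)).
by apply: eq_bigr => i _; case: eqP => [->|]; rewrite ?mul0r.
Qed.

Lemma row_sum_dir i : \sum_j move_dir i j = (if i == k then 1 else 0) - outflow i.
Proof.
rewrite sumrB; congr (_ - _).
  case: eqP => _; last exact: big1.
  by rewrite exchange_big -[RHS]c_sum1; apply: eq_bigr => l _; exact: sum_share.
rewrite exchange_big; apply: eq_bigr => l _.
by case: eqP => _; [exact: sum_share | exact: big1].
Qed.

Lemma col_sum_dir j : \sum_i move_dir i j = 0.
Proof.
rewrite sumrB (sum_if_eq predT) exchange_big /=.
by under [X in _ - X]eq_bigr do rewrite (sum_if_eq predT); rewrite subrr.
Qed.

Lemma moment_dir b i :
  \sum_j move_dir i j * (coord b (site j))%:~R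
    = ((if i == k then 1 else 0) - outflow i) * (coord b (gpt i))%:~R.
Proof.
under eq_bigr do rewrite mulrBl.
rewrite sumrB mulrBl; congr (_ - _).
  case: eqP => [->|_]; last by rewrite mul0r big1 // => j _; rewrite mul0r.
  under eq_bigr do rewrite mulr_suml.
  rewrite exchange_big mul1r coord_bary; apply: eq_bigr => l _; exact: share_moment.
under eq_bigr do rewrite mulr_suml.
rewrite exchange_big /outflow mulr_suml; apply: eq_bigr => l _.
case: eqP => [->|_]; first exact: share_moment.
by rewrite mul0r big1 // => j _; rewrite mul0r.
Qed.

Lemma sqnorm_bary_lt : sqnorm (gpt k) < \sum_l c l * sqnorm (gpt (kk l)).
Proof.
rewrite /sqnorm !(coord_bary true) !(coord_bary false) /=.
apply: convex_comb_sqnorm_lt => // l.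
by rewrite -[X in _ != X]k_bary (inj_eq (@emb_inj R)) (inj_eq gpt_inj).
Qed.

Section Step.
Variable eps : R.
Hypotheses (eps_gt0 : 0 < eps) (eps_k : load x k + eps <= 2^-1).
Hypothesis eps_kk : forall l, eps <= load x (kk l).
Hypothesis eps_lines : forall L, is_line L -> line_load x L < 3%:R / 2%:R ->
  line_load x L + eps <= 3%:R / 2%:R.

Local Notation y := (x + eps *: plan_of move_dir).

Lemma load_step i : load y i = load x i + eps * ((if i == k then 1 else 0) - outflow i).
Proof.
rewrite /load; under eq_bigr do rewrite flow_shift.
by rewrite big_split -mulr_sumr row_sum_dir.
Qed.

Lemma line_load_step L : line_load y L = line_load x L
  + eps * ((if on_line L k then 1 else 0) - \sum_l (if on_line L (kk l) then c l else 0)).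
Proof.
rewrite /line_load; under eq_bigr do rewrite load_step.
rewrite big_split -mulr_sumr sumrB sum_if_eq; congr (_ + eps * (_ - _)).
rewrite -(eq_bigr _ (fun i _ => mulr1 (outflow i))) sum_outflow.
by under eq_bigr do rewrite mulr1.
Qed.

Lemma flow_step_ge0 i j : 0 <= flow y i j.
Proof.
rewrite flow_shift /move_dir outflow_share; case: eqP => [->|_].
  rewrite outflow_k !mul0r subr0 addr_ge0 ?(flow_ge0 x_feas) // mulr_ge0 ?(ltW eps_gt0) //.
  by apply: sumr_ge0 => l _; exact: share_ge0.
rewrite sub0r mulrN subr_ge0 !mulrA ler_piMl ?(flow_ge0 x_feas) //.
have [->|/outflow_support [l ->]] := eqVneq (outflow i) 0; first by rewrite mulr0 mul0r.
rewrite ler_pdivrMr ?kk_load_gt0 // mul1r (le_trans _ (eps_kk l)) //.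
by rewrite ler_piMr ?(ltW eps_gt0) ?outflow_le1.
Qed.

Lemma feasible_step : feasible y.
Proof.
split.
- exact: flow_step_ge0.
- move=> j; under eq_bigr do rewrite flow_shift.
  by rewrite big_split /= -mulr_sumr col_sum_dir mulr0 addr0 (flow_mass x_feas).
- move=> b i; under eq_bigr do rewrite flow_shift mulrDl -mulrA.
  by rewrite big_split /= -mulr_sumr (flow_bary x_feas) moment_dir load_step; ring.
- move=> i; rewrite load_step; case: eqP => [->|_]; first by rewrite outflow_k subr0 mulr1.
  rewrite sub0r mulrN (le_trans _ (load_le_half x_feas i)) // gerDl oppr_le0.
  by rewrite mulr_ge0 ?(ltW eps_gt0) ?outflow_ge0.
- move=> L L_line; rewrite line_load_step.
  set covered := \sum_l _.
  have covered_ge0 : 0 <= covered by apply: sumr_ge0 => l _; case: ifP.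
  case: ifP => [/asboolP L_k|_]; last first.
    rewrite sub0r mulrN (le_trans _ (line_load_le x_feas L_line)) // gerDl oppr_le0.
    by rewrite mulr_ge0 ?(ltW eps_gt0).
  have [full|not_full] := eqVneq (line_load x L) (3%:R / 2%:R).
    suff -> : covered = 1 by rewrite subrr mulr0 addr0 full.
    rewrite -c_sum1; apply: eq_bigr => l _; case: ifP => // /asboolPn L_kk.
    have := c_ge0 l; rewrite le_eqVlt => /predU1P[<- // | c_gt0].
    by case: L_kk; exact: full_lines.
  have not_full_lt : line_load x L < 3%:R / 2%:R.
    by rewrite lt_neqAle not_full (line_load_le x_feas).
  apply: le_trans (eps_lines L_line not_full_lt).
  by rewrite lerD2l ler_piMr ?(ltW eps_gt0) // gerBl.
Qed.

Lemma inertia_step : inertia y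
  = inertia x + eps * (sqnorm (gpt k) - \sum_l c l * sqnorm (gpt (kk l))).
Proof.
rewrite /inertia; under eq_bigr do rewrite load_step mulrDl -mulrA mulrBl.
rewrite big_split -mulr_sumr sumrB (sum_outflow predT); congr (_ + eps * (_ - _)).
under eq_bigr do rewrite (fun_if (fun a => a * _)) mul1r mul0r.
by rewrite (sum_if_eq predT).
Qed.

End Step.

Lemma exists_feasible_lt_inertia :
  load x k < 2^-1 -> exists2 y, feasible y & inertia y < inertia x.
Proof.
move=> k_lt_half.
(* A line load only depends on the finite set of grid points on the line. *)
pose slacks := (2^-1 - load x k) :: [seq load x i | i <- enum 'I_m]
  ++ [seq 3%:R / 2%:R - \sum_(i in B) load x i | B : {set 'I_m} <- enum {set 'I_m}].
have [eps eps_gt0 eps_le] := exists_pos_lower_bound slacks.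
have eps_k : load x k + eps <= 2^-1.
  by rewrite -lerBrDl eps_le ?mem_head ?subr_gt0.
have eps_kk l : eps <= load x (kk l).
  by rewrite eps_le ?kk_load_gt0 // inE mem_cat map_f ?mem_enum ?orbT.
have eps_lines L : is_line L -> line_load x L < 3%:R / 2%:R ->
    line_load x L + eps <= 3%:R / 2%:R.
  move=> _ L_lt; rewrite -lerBrDl eps_le ?subr_gt0 //.
  rewrite inE mem_cat; apply/orP; right; apply/orP; right; apply/mapP.
  exists [set i | on_line L i]%SET; first by rewrite mem_enum.
  by congr (_ - _); apply: eq_bigl => i; rewrite inE.
exists (x + eps *: plan_of move_dir); first exact: feasible_step.
by rewrite inertia_step gtrDl pmulr_rlt0 // subr_lt0 sqnorm_bary_lt.
Qed.

End Move.

Section Optimal.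
Variable x : plan.
Hypothesis x_opt : optimal x.
Local Notation B := (plan_seq x).

Lemma optimal_no_move (I : finType) (w : I -> pt) (c : I -> R) v :
  (forall l, w l != v) -> (forall l, 0 <= c l) -> \sum_l c l = 1 ->
  emb R v = barycenter c (fun l => emb R (w l)) ->
  (forall l, 0 < mult B (w l)) -> mult B v < 2^-1 ->
  (forall L, is_line L -> L (emb R v) -> count_in B L = 3%:R / 2%:R ->
     forall l, 0 < c l -> L (emb R (w l))) ->
  False.
Proof.
move=> w_neq_v c_ge0 c_sum1 v_bary w_supp v_lt full_lines.
have [kk kk_w] : exists kk : I -> 'I_m, forall l, gpt (kk l) = w l.
  exact: fin_all_exists (fun l => plan_seq_support (w_supp l)).
have v_coord b : (coord b v)%:~R = \sum_l c l * (coord b (w l))%:~R :> R.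
  by case: b; case: v_bary.
have [k k_v] : exists k, gpt k = v.
  apply: grid_gpt; rewrite mem_grid.
  suff v_box b : coord b v \in box_coords by rewrite (v_box true) (v_box false).
  rewrite mem_box_coords -!(ler_int R) v_coord; apply: convex_comb_in_itv => // l.
  rewrite !ler_int -mem_box_coords.
  by have := @gpt_in_grid (kk l); rewrite kk_w mem_grid; case: b => /andP[].
subst v; move: v_bary w_supp full_lines v_lt.
rewrite -(funext kk_w) /= mult_plan_seq_gpt => k_bary kk_supp full_lines k_lt.
have [y y_feas y_lt] : exists2 y, feasible y & inertia y < inertia x.
  apply: (exists_feasible_lt_inertia x_opt.1 (k := k) (kk := kk)) => // [l|l|L L_line L_k].
  - by rewrite -(inj_eq gpt_inj) kk_w.
  - by rewrite -mult_plan_seq_gpt.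
  - by rewrite -count_in_plan_seq; exact: full_lines.
by have := x_opt.2 y y_feas; rewrite leNgt y_lt.
Qed.

Lemma optimal_on_segment p q v :
  p != v -> q != v -> 0 < mult B p -> 0 < mult B q -> mult B v < 2^-1 ->
  on_segment (emb R p) (emb R q) (emb R v) ->
  (forall L, is_line L -> L (emb R v) -> count_in B L = 3%:R / 2%:R ->
     L (emb R p) \/ L (emb R q)) ->
  False.
Proof.
move=> p_neq q_neq p_supp q_supp v_lt [a [/andP[a_ge0 a_le1] v_def]] full_lines.
apply: (@optimal_no_move _ (fun b : bool => if b then q else p)
                            (fun b => if b then a else 1 - a) v) => //.
- by case.
- by case; rewrite ?subr_ge0.
- by rewrite big_bool /= subrKC.
- by rewrite v_def /barycenter !big_bool /=; congr pair; ring.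
- by case.
move=> L L_line L_v L_full b _.
have emb_neq w : w != v -> emb R v != emb R w by rewrite (inj_eq (@emb_inj R)) eq_sym.
have [] := line_segment_endpoints L_line L_v v_def (emb_neq _ p_neq) (emb_neq _ q_neq).
  exact: full_lines.
by case: b.
Qed.

Lemma optimal_in_triangle v1 v2 v3 v :
  v1 != v -> v2 != v -> v3 != v ->
  0 < mult B v1 -> 0 < mult B v2 -> 0 < mult B v3 -> mult B v < 2^-1 ->
  in_triangle (emb R v1) (emb R v2) (emb R v3) (emb R v) ->
  (forall L, is_line L -> L (emb R v) -> count_in B L <> 3%:R / 2%:R) ->
  False.
Proof.
move=> v1v v2v v3v m1 m2 m3 v_lt [a1 [a2 [a3 [a1_ge0 [a2_ge0 [a3_ge0 [a_sum1 v_def]]]]]]].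
move=> no_full_line.
apply: (@optimal_no_move _ (fun l : 'I_3 => nth v [:: v1; v2; v3] l)
                            (fun l => nth 0 [:: a1; a2; a3] l) v) => //.
- by case=> -[|[|[|]]].
- by case=> -[|[|[|]]].
- by rewrite !big_ord_recl big_ord0 /= addr0 addrA.
- by rewrite v_def /barycenter !big_ord_recl !big_ord0 /= !addr0 !addrA.
- by case=> -[|[|[|]]].
by move=> L L_line L_v /(no_full_line L L_line L_v).
Qed.

Lemma optimal_triangle_property : triangle_property B.
Proof.
move=> v1 v2 v3 v; set sides := [:: (v1, v2); (v2, v3); (v1, v3)].
move=> vs_uniq m1 m2 m3 v_tri.
have [|v_half] := eqVneq (mult B v) 2^-1; [by left | right].
have v_lt : mult B v < 2^-1.
  by rewrite lt_neqAle v_half mult_plan_seq_le_half //; case: x_opt.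
apply: contrapT => no_line.
have side_ok p q : (p, q) \in sides -> [/\ p != v, q != v, 0 < mult B p & 0 < mult B q].
  move: vs_uniq; rewrite /= !inE !negb_or => /and4P[/and3P[_ _ v1v] /andP[_ v2v] v3v _].
  by move=> /or3P[]/eqP[-> ->]; split.
have full_side L : is_line L -> L (emb R v) -> count_in B L = 3%:R / 2%:R ->
    exists p q, [/\ (p, q) \in sides, on_segment (emb R p) (emb R q) (emb R v),
                    L (emb R p) & L (emb R q)].
  move=> L_line L_v L_full; apply: contrapT => no_side; apply: no_line.
  exists L; split => // p q pq_side v_pq L_pq; apply: no_side; exists p, q.
  by rewrite L_pq; have [? ?] := line_through_endpoints (emb R p) (emb R q).
have [[p [q [pq_side v_pq]]]|no_side] := pselect (exists p q,
    (p, q) \in sides /\ on_segment (emb R p) (emb R q) (emb R v)).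
  have [p_neq q_neq p_supp q_supp] := side_ok p q pq_side.
  apply: (optimal_on_segment p_neq q_neq p_supp q_supp v_lt v_pq) => L L_line L_v L_full.
  have [p' [q' [pq'_side _ L_p' L_q']]] := full_side L L_line L_v L_full.
  move: pq_side pq'_side L_p' L_q'; rewrite !inE.
  by move=> /or3P[]/eqP[-> ->] /or3P[]/eqP[-> ->]; tauto.
have [v1v v2v _ _] := side_ok v1 v2 (mem_head _ _).
have [_ v3v _ _] : [/\ v2 != v, v3 != v, 0 < mult B v2 & 0 < mult B v3].
  by apply: side_ok; rewrite !inE eqxx orbT.
apply: (optimal_in_triangle v1v v2v v3v m1 m2 m3 v_lt v_tri) => L L_line L_v L_full.
have [p [q [pq_side v_pq _ _]]] := full_side L L_line L_v L_full.
by apply: no_side; exists p, q.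
Qed.

End Optimal.

End TransportPlans.

Theorem lemma3p2 (R : realType) :
  (exists A : rseq R, counterexample A) ->
  exists A : rseq R, counterexample A /\ triangle_property A.
Proof.
case=> A A_counter; have [x x_opt] := exists_optimal A_counter.
exists (plan_seq x); split; first exact: plan_seq_counterexample x_opt.1.
exact: optimal_triangle_property.
Qed.
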